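(* Let $(E\to M,\rho,\langle\cdot,\cdot\rangle,\circ)$ be a Courant algebroid and $(\mathbf I,\mathbf J,\mathbf K)$ an almost hypercomplex structure on $E$. Then each of the following formulas defines a hypercomplex connection: $$\nabla_XY=-\tfrac12\mathbf K\big(\mathbf JY\circ\mathbf IX-\mathbf J(Y\circ\mathbf IX)-\mathbf I(\mathbf JY\circ X)+\mathbf J\mathbf I(Y\circ X)\big),$$ $$\nabla'_XY=-\tfrac12\mathbf I\big(\mathbf KY\circ\mathbf JX-\mathbf K(Y\circ\mathbf JX)-\mathbf J(\mathbf KY\circ X)+\mathbf K\mathbf J(Y\circ X)\big),$$ $$\nabla''_XY=-\tfrac12\mathbf J\big(\mathbf IY\circ\mathbf KX-\mathbf I(Y\circ\mathbf KX)-\mathbf K(\mathbf IY\circ X)+\mathbf I\mathbf K(Y\circ X)\big),$$ for $X,Y\in\Gamma(E)$.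
   Context: A Courant algebroid $(E\to M,\rho,\langle\cdot,\cdot\rangle,\circ)$ consists of a real vector bundle $E\to M$ over a smooth manifold, a nondegenerate symmetric fiberwise bilinear pairing $\langle\cdot,\cdot\rangle$ on $E$, a vector bundle map $\rho:E\to TM$ (the anchor), and an $\mathbb R$-bilinear operation $\circ$ on $\Gamma(E)$ (the Dorfman bracket) such that for all $f\in C^\infty(M)$, $x,y,z\in\Gamma(E)$: $x\circ(y\circ z)=(x\circ y)\circ z+y\circ(x\circ z)$; $\rho(x\circ y)=[\rho(x),\rho(y)]$; $x\circ(fy)=(\rho(x)f)y+f(x\circ y)$; $x\circ y+y\circ x=2D\langle x,y\rangle$; $(Df)\circ x=0$; $\rho(x)\langle y,z\rangle=\langle x\circ y,z\rangle+\langle y,x\circ z\rangle$. Here $D:C^\infty(M)\to\Gamma(E)$ is the $\mathbb R$-linear map defined by $\langle Df,x\rangle=\tfrac12\rho(x)f$. An almost hypercomplex structure on $E$ is a triple $(\mathbf I,\mathbf J,\mathbf K)$ of vector bundle endomorphisms of $E$ over $\mathrm{id}_M$, each orthogonal for $\langle\cdot,\cdot\rangle$, with $\mathbf I^2=\mathbf J^2=\mathbf K^2=\mathbf I\mathbf J\mathbf K=-1$. Given an almost hypercomplex structure, for $f\in C^\infty(M)$ and $X,Y\in\Gamma(E)$ set $\Delta_f(X,Y)=\langle X,Y\rangle Df+\langle\mathbf IX,Y\rangle\mathbf I Df+\langle\mathbf JX,Y\rangle\mathbf JDf+\langle\mathbf KX,Y\rangle\mathbf KDf$. A hypercomplex connection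 is an $\mathbb R$-bilinear map $\Gamma(E)\times\Gamma(E)\to\Gamma(E)$, $(X,Y)\mapsto\nabla_XY$, with $\nabla_{fX}Y=f\nabla_XY$ and $\nabla_X(fY)=(\rho(X)f)Y+f\nabla_XY-\Delta_f(X,Y)$ for all $f\in C^\infty(M)$, $X,Y\in\Gamma(E)$. *)

(* Algebraic model of a Courant algebroid:
   R      : the real scalars (a real field),
   A      : the commutative R-algebra C^oo(M),
   S      : the A-module Gamma(E) of sections,
   rho    : anchor, x |-> (vector field rho(x) acting on functions),
   pair   : the C^oo(M)-valued pairing on sections,
   dorf   : the Dorfman bracket,
   D      : the operator C^oo(M) -> Gamma(E) defined by <Df,x> = 1/2 rho(x) f. *)
From HB Require Import structures.
From mathcomp Require Import all_boot all_order all_algebra.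
Set Implicit Arguments. Unset Strict Implicit. Unset Printing Implicit Defensive.
Import Order.TTheory GRing.Theory Num.Theory.
Local Open Scope ring_scope.

Definition rsc (R : realFieldType) (A : comAlgType R) (S : lmodType A)
  (c : R) (v : S) : S := (c%:A : A) *: v.

Definition is_anchor (R : realFieldType) (A : comAlgType R) (S : lmodType A)
  (rho : S -> A -> A) : Prop :=
  [/\ (forall (a : A) (x y : S) (f : A), rho (a *: x + y) f = a * rho x f + rho y f),
      (forall (x : S) (f g : A), rho x (f + g) = rho x f + rho x g),
      (forall (x : S) (c : R) (f : A), rho x (c *: f) = c *: rho x f) &
      (forall (x : S) (f g : A), rho x (f * g) = rho x f * g + f * rho x g)].

Definition is_pairing (R : realFieldType) (A : comAlgType R) (S : lmodType A)
  (pair : S -> S -> A) : Prop :=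
  [/\ (forall x y : S, pair x y = pair y x),
      (forall (a : A) (x y z : S), pair (a *: x + y) z = a * pair x z + pair y z) &
      (forall x : S, (forall y : S, pair x y = 0) -> x = 0)].

Definition is_D (R : realFieldType) (A : comAlgType R) (S : lmodType A)
  (rho : S -> A -> A) (pair : S -> S -> A) (D : A -> S) : Prop :=
  forall (f : A) (x : S), pair (D f) x = (2%:R^-1 : R) *: rho x f.

Definition is_courant (R : realFieldType) (A : comAlgType R) (S : lmodType A)
  (rho : S -> A -> A) (pair : S -> S -> A) (dorf : S -> S -> S) (D : A -> S) : Prop :=
  [/\ is_anchor rho, is_pairing pair, is_D rho pair D,
      [/\ (forall x y z : S, dorf (x + y) z = dorf x z + dorf y z),
          (forall x y z : S, dorf x (y + z) = dorf x y + dorf x z),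
          (forall (c : R) (x y : S), dorf (rsc c x) y = rsc c (dorf x y)) &
          (forall (c : R) (x y : S), dorf x (rsc c y) = rsc c (dorf x y))] &
      [/\ (forall x y z : S, dorf x (dorf y z) = dorf (dorf x y) z + dorf y (dorf x z)),
          (forall (x y : S) (f : A), rho (dorf x y) f = rho x (rho y f) - rho y (rho x f)),
          (forall (x y : S) (f : A), dorf x (f *: y) = rho x f *: y + f *: dorf x y),
          (forall x y : S, dorf x y + dorf y x = (D (pair x y)) *+ 2) &
          (forall (f : A) (x : S), dorf (D f) x = 0)] /\
      (forall x y z : S, rho x (pair y z) = pair (dorf x y) z + pair y (dorf x z))].

(* vector bundle endomorphism over id_M = A-linear map on sections *)
Definition is_bundle_endo (A : pzRingType) (S : lmodType A) (T : S -> S) : Prop :=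
  forall (a : A) (x y : S), T (a *: x + y) = a *: T x + T y.

Definition is_almost_hypercomplex (R : realFieldType) (A : comAlgType R) (S : lmodType A)
  (pair : S -> S -> A) (I J K : S -> S) : Prop :=
  [/\ is_bundle_endo I, is_bundle_endo J, is_bundle_endo K,
      (forall x y : S, [/\ pair (I x) (I y) = pair x y,
                           pair (J x) (J y) = pair x y &
                           pair (K x) (K y) = pair x y]) &
      (forall x : S, [/\ I (I x) = - x, J (J x) = - x, K (K x) = - x &
                         I (J (K x)) = - x])].

Definition Delta (R : realFieldType) (A : comAlgType R) (S : lmodType A)
  (pair : S -> S -> A) (D : A -> S) (I J K : S -> S) (f : A) (X Y : S) : S :=
  pair X Y *: D f + pair (I X) Y *: I (D f) + pair (J X) Y *: J (D f)
  + pair (K X) Y *: K (D f).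

Definition is_hypercomplex_connection (R : realFieldType) (A : comAlgType R)
  (S : lmodType A) (rho : S -> A -> A) (pair : S -> S -> A) (D : A -> S)
  (I J K : S -> S) (nabla : S -> S -> S) : Prop :=
  [/\
      [/\ (forall X Y Z : S, nabla (X + Y) Z = nabla X Z + nabla Y Z),
          (forall X Y Z : S, nabla X (Y + Z) = nabla X Y + nabla X Z),
          (forall (c : R) (X Y : S), nabla (rsc c X) Y = rsc c (nabla X Y)) &
          (forall (c : R) (X Y : S), nabla X (rsc c Y) = rsc c (nabla X Y))],
      (forall (f : A) (X Y : S), nabla (f *: X) Y = f *: nabla X Y) &
      (forall (f : A) (X Y : S),
          nabla X (f *: Y) = rho X f *: Y + f *: nabla X Y - Delta pair D I J K f X Y)].

From HB Require Import structures.
From mathcomp Require Import all_boot all_order all_algebra.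
Import Order.TTheory GRing.Theory Num.Theory.
Set Implicit Arguments. Unset Strict Implicit.
Local Open Scope ring_scope.

(* Write quad u v w t := u - J v - I w + J (I t) and
     hbracket X Y := quad (JY o IX) (Y o IX) (JY o X) (Y o X),
   so that the first connection of the theorem is nabla_X Y = -1/2 K (hbracket X Y).  For the two Leibniz-type
   rules we use the right Leibniz rule of the bracket and the left rule
     (f y) o z = f (y o z) + 2 <y,z> Df - (rho(z) f) y,
   which follows from the symmetric part x o y + y o x = 2 D<x,y> and D(fg) = f Dg + g Df.
   In X the anchor terms cancel inside quad, giving C^oo(M)-linearity; in Y the anchor
   terms add up to 2 (rho(X) f) K Y and the D-terms to -2 K (Delta_f(X,Y)), using only
   the quaternion relations and the orthogonality of I, J, K.  Applying -1/2 K
   (with K K = -1) yields the required Leibniz rule.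
   The other two connections are the first one for the cyclically permuted almost
   hypercomplex structures (J, K, I) and (K, I, J), and Delta is invariant under this
   cyclic permutation. *)

Section BundleEndo.
Variables (A : pzRingType) (S : lmodType A) (T : S -> S).
Hypothesis hT : is_bundle_endo T.

Lemma bundle_endo_linear : linear T.
Proof. by move=> a x y; rewrite hT. Qed.

Definition endo_lin : {linear S -> S} :=
  HB.pack T (GRing.isLinear.Build A S S *:%R T bundle_endo_linear).

Lemma endoD x y : T (x + y) = T x + T y.
Proof. exact: (raddfD endo_lin). Qed.
Lemma endoN x : T (- x) = - T x.
Proof. exact: (raddfN endo_lin). Qed.
Lemma endoB x y : T (x - y) = T x - T y.
Proof. exact: (raddfB endo_lin). Qed.
Lemma endoMn x n : T (x *+ n) = T x *+ n.
Proof. exact: (raddfMn endo_lin). Qed.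
Lemma endoZ a x : T (a *: x) = a *: T x.
Proof. exact: (linearZZ endo_lin). Qed.
End BundleEndo.

Section RealScaling.
Variables (R : realFieldType) (A : comAlgType R) (S : lmodType A).

Lemma rscD c (u v : S) : rsc c (u + v) = rsc c u + rsc c v.
Proof. exact: scalerDr. Qed.

Lemma rscZ c (f : A) (v : S) : rsc c (f *: v) = f *: rsc c v.
Proof. by rewrite /rsc !scalerA mulrC. Qed.

Lemma rsc_halfK (v : S) : rsc (2%:R^-1 : R) (v *+ 2) = v.
Proof.
have half : (2%:R^-1 + 2%:R^-1 : R) = 1 by rewrite [RHS](splitr 1) mul1r.
by rewrite mulr2n /rsc scalerDr -scalerDl -scalerDl half !scale1r.
Qed.
End RealScaling.

Section Quaternion.
Variables (R : realFieldType) (A : comAlgType R) (S : lmodType A).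
Variables (pair : S -> S -> A) (I J K : S -> S).
Hypothesis hH : is_almost_hypercomplex pair I J K.

Let linI : is_bundle_endo I. Proof. by case: hH. Qed.
Let linJ : is_bundle_endo J. Proof. by case: hH. Qed.
Let linK : is_bundle_endo K. Proof. by case: hH. Qed.

Lemma sqrI x : I (I x) = - x. Proof. by case: hH => _ _ _ _ /(_ x) []. Qed.
Lemma sqrJ x : J (J x) = - x. Proof. by case: hH => _ _ _ _ /(_ x) []. Qed.
Lemma sqrK x : K (K x) = - x. Proof. by case: hH => _ _ _ _ /(_ x) []. Qed.

Lemma compIJ x : I (J x) = K x.
Proof.
case: hH => _ _ _ _ /(_ (K x)) [_ _ _].
by rewrite sqrK !endoN // => /oppr_inj.
Qed.

Lemma compJI x : J (I x) = - K x.
Proof.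
have JIJ y : J (I (J y)) = I y.
  by rewrite -[LHS]opprK -(sqrI (J (I (J y)))) !compIJ sqrK endoN // opprK.
by rewrite -[K x]compIJ -JIJ sqrJ.
Qed.

Lemma compIK x : I (K x) = - J x. Proof. by rewrite -compIJ sqrI. Qed.
Lemma compKJ x : K (J x) = - I x. Proof. by rewrite -compIJ sqrJ endoN. Qed.
Lemma compKI x : K (I x) = J x. Proof. by rewrite -compIJ compJI endoN // compIK opprK. Qed.

Lemma orthJ x y : pair (J x) (J y) = pair x y.
Proof. by case: hH => _ _ _ /(_ x y) []. Qed.

Lemma almost_hypercomplex_cycle : is_almost_hypercomplex pair J K I.
Proof.
case: hH => _ _ _ orth _; split => // [x y|x].
  by case: (orth x y).
by rewrite sqrJ sqrK sqrI compKI sqrJ.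
Qed.
End Quaternion.

Section Courant.
Variables (R : realFieldType) (A : comAlgType R) (S : lmodType A).
Variables (rho : S -> A -> A) (pair : S -> S -> A) (dorf : S -> S -> S) (D : A -> S).
Hypothesis hC : is_courant rho pair dorf D.

Let hpair : is_pairing pair. Proof. by case: hC. Qed.

Lemma pairC x y : pair x y = pair y x. Proof. by case: hpair. Qed.

Lemma pair_linearl z : linear_for *%R (pair^~ z).
Proof. by case: hpair => _ h _ a x y; apply: h. Qed.

Definition pair_lin (z : S) : {linear S -> A | *%R} :=
  HB.pack (pair^~ z) (GRing.isLinear.Build A S A *%R (pair^~ z) (pair_linearl z)).

Lemma pairDl x y z : pair (x + y) z = pair x z + pair y z.
Proof. exact: (raddfD (pair_lin z)). Qed.
Lemma pairNl x z : pair (- x) z = - pair x z.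
Proof. exact: (raddfN (pair_lin z)). Qed.
Lemma pairZl a x z : pair (a *: x) z = a * pair x z.
Proof. exact: (linearZ_LR (pair_lin z)). Qed.
Lemma pairNr x z : pair z (- x) = - pair z x.
Proof. by rewrite pairC pairNl pairC. Qed.

Lemma pair_nondeg x : (forall y, pair x y = 0) -> x = 0.
Proof. by case: hpair => _ _; apply. Qed.

Lemma pairD f x : pair (D f) x = (2%:R^-1 : R) *: rho x f.
Proof. by case: hC. Qed.

Lemma anchorM x f g : rho x (f * g) = rho x f * g + f * rho x g.
Proof. by case: hC => [[]]. Qed.

Lemma D_mul f g : D (f * g) = f *: D g + g *: D f.
Proof.
apply/subr0_eq/pair_nondeg => y.
rewrite pairDl pairNl pairDl !pairZl !pairD anchorM scalerDr -!scalerAr.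
by rewrite [rho y f * g]mulrC [X in X - _]addrC subrr.
Qed.

Lemma dorf_skew x y : dorf x y + dorf y x = D (pair x y) *+ 2.
Proof. by case: hC => _ _ _ _ [[]]. Qed.

Lemma dorfZr x f y : dorf x (f *: y) = rho x f *: y + f *: dorf x y.
Proof. by case: hC => _ _ _ _ [[]]. Qed.

Definition leibniz_defect (f : A) (y z : S) : S :=
  (pair y z *: D f) *+ 2 - rho z f *: y.

Lemma dorfZl f y z : dorf (f *: y) z = f *: dorf y z + leibniz_defect f y z.
Proof.
have swap a b : dorf a b = D (pair a b) *+ 2 - dorf b a by rewrite -dorf_skew addrK.
rewrite swap pairZl D_mul dorfZr (swap z y) (pairC z y) /leibniz_defect.
rewrite scalerBr -scalerMnr mulrnDl opprD opprB addrCA addrA [_ + (_ - _)]addrC.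
by rewrite -addrA [X in _ + X]addrCA addKr [- _ + _]addrC.
Qed.

Lemma pair_skew (T : S -> S) :
  (forall x, T (T x) = - x) -> (forall x y, pair (T x) (T y) = pair x y) ->
  forall x y, pair (T x) y = - pair x (T y).
Proof. by move=> TT orth x y; rewrite -orth TT pairNl. Qed.

Lemma dorfDl x y z : dorf (x + y) z = dorf x z + dorf y z.
Proof. by case: hC => _ _ _ []. Qed.
Lemma dorfDr x y z : dorf x (y + z) = dorf x y + dorf x z.
Proof. by case: hC => _ _ _ []. Qed.
Lemma dorf_rscl c x y : dorf (rsc c x) y = rsc c (dorf x y).
Proof. by case: hC => _ _ _ []. Qed.
Lemma dorf_rscr c x y : dorf x (rsc c y) = rsc c (dorf x y).
Proof. by case: hC => _ _ _ []. Qed.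
End Courant.

Section Connection.
Variables (R : realFieldType) (A : comAlgType R) (S : lmodType A).
Variables (rho : S -> A -> A) (pair : S -> S -> A) (dorf : S -> S -> S) (D : A -> S).
Variables (I J K : S -> S).
Hypothesis hC : is_courant rho pair dorf D.
Hypothesis hH : is_almost_hypercomplex pair I J K.

Let linI : is_bundle_endo I. Proof. by case: hH. Qed.
Let linJ : is_bundle_endo J. Proof. by case: hH. Qed.
Let linK : is_bundle_endo K. Proof. by case: hH. Qed.

Definition quad (u v w t : S) : S := u - J v - I w + J (I t).

Lemma quadD u v w t u' v' w' t' :
  quad (u + u') (v + v') (w + w') (t + t') = quad u v w t + quad u' v' w' t'.
Proof.
rewrite /quad !(endoD linI, endoD linJ) !opprD.
by rewrite [X in X + _ + _]addrACA [X in X + _ = _]addrACA [LHS]addrACA.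
Qed.

Lemma quadZ a u v w t : quad (a *: u) (a *: v) (a *: w) (a *: t) = a *: quad u v w t.
Proof. by rewrite /quad !(endoZ linI, endoZ linJ) -!scalerBr -scalerDr. Qed.

Lemma quadN u v w t : quad (- u) (- v) (- w) (- t) = - quad u v w t.
Proof. by rewrite -!scaleN1r quadZ. Qed.

Lemma quadMn u v w t n : quad (u *+ n) (v *+ n) (w *+ n) (t *+ n) = quad u v w t *+ n.
Proof.
elim: n => [|n IHn]; first by have := quadZ 0 0 0 0 0; rewrite !scale0r.
by rewrite !mulrS quadD IHn.
Qed.

(* anchor terms from the right Leibniz rule cancel *)
Lemma quad_anchor_right a b x :
  quad (a *: I x) (b *: I x) (a *: x) (b *: x) = 0.
Proof. by rewrite /quad !(endoZ linI, endoZ linJ) addrAC subrK subrr. Qed.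

(* anchor terms from the left Leibniz rule double up along K *)
Lemma quad_anchor_left a b y :
  quad (a *: J y) (a *: y) (b *: J y) (b *: y) = - (b *: K y) *+ 2.
Proof.
rewrite /quad !(endoZ linI, endoZ linJ) (compIJ hH) (compJI hH) subrr sub0r scalerN.
by rewrite mulr2n ?opprD.
Qed.

(* the D-terms from the left Leibniz rule assemble into -K Delta *)
Lemma quad_pairing f X Y :
  quad (pair (J Y) (I X) *: D f) (pair Y (I X) *: D f)
       (pair (J Y) X *: D f) (pair Y X *: D f) = - K (Delta pair D I J K f X Y).
Proof.
have skewJ := pair_skew hC (sqrJ hH) (orthJ hH).
rewrite !skewJ (compJI hH) (pairNr hC) opprK !(pairC hC Y).
rewrite /quad /Delta !(endoZ linI, endoZ linJ, endoZ linK, endoD linK).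
rewrite (compJI hH) (compKI hH) (compKJ hH) (sqrK hH) !scalerN !scaleNr !opprD !opprK.
by rewrite [LHS](ACl (4*2*3*1)).
Qed.

Lemma quad_defect f X Y :
  quad (leibniz_defect rho pair D f (J Y) (I X)) (leibniz_defect rho pair D f Y (I X))
       (leibniz_defect rho pair D f (J Y) X) (leibniz_defect rho pair D f Y X)
  = K (rho X f *: Y - Delta pair D I J K f X Y) *+ 2.
Proof.
rewrite /leibniz_defect quadD quadN quadMn quad_pairing quad_anchor_left.
rewrite (endoB linK) (endoZ linK) mulrnBl.
by rewrite !mulNrn opprK addrC.
Qed.

Definition hbracket (X Y : S) : S :=
  quad (dorf (J Y) (I X)) (dorf Y (I X)) (dorf (J Y) X) (dorf Y X).

Lemma hbracketDl X X' Y : hbracket (X + X') Y = hbracket X Y + hbracket X' Y.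
Proof. by rewrite /hbracket (endoD linI) !(dorfDr hC) quadD. Qed.

Lemma hbracketDr X Y Y' : hbracket X (Y + Y') = hbracket X Y + hbracket X Y'.
Proof. by rewrite /hbracket (endoD linJ) !(dorfDl hC) quadD. Qed.

Lemma hbracket_rscl c X Y : hbracket (rsc c X) Y = rsc c (hbracket X Y).
Proof. by rewrite /hbracket (endoZ linI) -!/(rsc _ _) !(dorf_rscr hC) /rsc quadZ. Qed.

Lemma hbracket_rscr c X Y : hbracket X (rsc c Y) = rsc c (hbracket X Y).
Proof. by rewrite /hbracket (endoZ linJ) -!/(rsc _ _) !(dorf_rscl hC) /rsc quadZ. Qed.

(* A-linearity in X: the anchor terms of the right Leibniz rule cancel *)
Lemma hbracketZl f X Y : hbracket (f *: X) Y = f *: hbracket X Y.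
Proof.
by rewrite /hbracket (endoZ linI) !(dorfZr hC) quadD quadZ quad_anchor_right add0r.
Qed.

Lemma hbracketZr f X Y :
  hbracket X (f *: Y) = f *: hbracket X Y + K (rho X f *: Y - Delta pair D I J K f X Y) *+ 2.
Proof. by rewrite /hbracket (endoZ linJ) !(dorfZl hC) quadD quadZ quad_defect. Qed.

Definition nablaK (X Y : S) : S := - rsc (2%:R^-1 : R) (K (hbracket X Y)).

Lemma nablaK_connection : is_hypercomplex_connection rho pair D I J K nablaK.
Proof.
rewrite /nablaK; split; first split.
- by move=> X X' Y; rewrite hbracketDl (endoD linK) rscD opprD.
- by move=> X Y Y'; rewrite hbracketDr (endoD linK) rscD opprD.
- by move=> c X Y; rewrite hbracket_rscl /rsc (endoZ linK) !scalerN !scalerA mulrC.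
- by move=> c X Y; rewrite hbracket_rscr /rsc (endoZ linK) !scalerN !scalerA mulrC.
- by move=> f X Y; rewrite hbracketZl (endoZ linK) rscZ scalerN.
- move=> f X Y; rewrite hbracketZr (endoD linK) (endoZ linK) (endoMn linK) (sqrK hH).
  by rewrite rscD rscZ rsc_halfK opprD opprK scalerN addrA [- _ + _]addrC.
Qed.
End Connection.

Lemma Delta_cycle (R : realFieldType) (A : comAlgType R) (S : lmodType A)
  (pair : S -> S -> A) (D : A -> S) (I J K : S -> S) f X Y :
  Delta pair D J K I f X Y = Delta pair D I J K f X Y.
Proof. by rewrite /Delta addrAC [X in X + _ = _]addrAC. Qed.

Lemma hypercomplex_connection_cycle (R : realFieldType) (A : comAlgType R)
  (S : lmodType A) (rho : S -> A -> A) (pair : S -> S -> A) (D : A -> S)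
  (I J K : S -> S) (nabla : S -> S -> S) :
  is_hypercomplex_connection rho pair D J K I nabla ->
  is_hypercomplex_connection rho pair D I J K nabla.
Proof. by case=> hR hZl hZr; split=> // f X Y; rewrite hZr Delta_cycle. Qed.

Theorem mainTheorem3 (R : realFieldType) (A : comAlgType R) (S : lmodType A)
  (rho : S -> A -> A) (pair : S -> S -> A) (dorf : S -> S -> S) (D : A -> S)
  (I J K : S -> S)
  (hC : is_courant rho pair dorf D)
  (hH : is_almost_hypercomplex pair I J K) :
  [/\ is_hypercomplex_connection rho pair D I J K
        (fun X Y => - rsc (2%:R^-1 : R)
           (K (dorf (J Y) (I X) - J (dorf Y (I X)) - I (dorf (J Y) X) + J (I (dorf Y X))))),
      is_hypercomplex_connection rho pair D I J K
        (fun X Y => - rsc (2%:R^-1 : R)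
           (I (dorf (K Y) (J X) - K (dorf Y (J X)) - J (dorf (K Y) X) + K (J (dorf Y X))))) &
      is_hypercomplex_connection rho pair D I J K
        (fun X Y => - rsc (2%:R^-1 : R)
           (J (dorf (I Y) (K X) - I (dorf Y (K X)) - K (dorf (I Y) X) + I (K (dorf Y X)))))].
Proof.
have hH' := almost_hypercomplex_cycle hH.
have hH'' := almost_hypercomplex_cycle hH'.
split.
- exact: nablaK_connection hC hH.
- exact: hypercomplex_connection_cycle (nablaK_connection hC hH').
- exact: hypercomplex_connection_cycle
    (hypercomplex_connection_cycle (nablaK_connection hC hH'')).
Qed.
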